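(* Every functional $\Lambda$-system algebra over a set $\mathcal{X}$ that has unique fixed points and whose function $\Gamma$ permits reordering is composition-order invariant.
   Context: Let $\Lambda,\mathcal{X}$ be sets. For finite disjoint $\mathcal{I},\mathcal{O}\subseteq\Lambda$ let $\mathfrak{S}_{\mathcal{I},\mathcal{O}}$ be a set of functions $s:\mathcal{X}^{\mathcal{I}}\to\mathcal{X}^{\mathcal{O}}$ ($\mathcal{X}^{\mathcal{I}}$ = functions $\mathcal{I}\to\mathcal{X}$) and $\mathfrak{S}$ their union. For $s\in\mathfrak{S}_{\mathcal{I},\mathcal{O}}$, $i\in\mathcal{I}$, $o\in\mathcal{O}$, $\mathbf{x}\in\mathcal{X}^{\mathcal{I}\setminus\{i\}}$ let $\mathrm{Fix}(s,i,o,\mathbf{x}):=\{x_i\in\mathcal{X}\mid s(\mathbf{x}\cup\{(i,x_i)\})(o)=x_i\}$. Let $\Gamma$ assign to each $s\in\mathfrak{S}_{\mathcal{I},\mathcal{O}}$ a set of unordered pairs $\{i,o\}$, $i\in\mathcal{I}$, $o\in\mathcal{O}$, with $\mathrm{Fix}(s,i,o,\mathbf{x})\neq\emptyset$ for all $\mathbf{x}$, and let $\phi^s_{i,o}:\mathcal{X}^{\mathcal{I}\setminus\{i\}}\to\mathcal{X}$ satisfy $\phi^s_{i,o}(\mathbf{x})\in\mathrm{Fix}(s,i,o,\mathbf{x})$. Define $\lambda(s)=\mathcal{I}\cup\mathcal{O}$; $s_1\parallel s_2$ (for $s_j\in\mathfrak{S}_{\mathcal{I}_j,\mathcal{O}_j}$,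 all four index sets pairwise disjoint) by $(s_1\parallel s_2)(\mathbf{x})(o_j)=s_j(\mathbf{x}|_{\mathcal{I}_j})(o_j)$; and $\gamma_{i,o}(s)(\mathbf{x})=s(\mathbf{x}\cup\{(i,\phi^s_{i,o}(\mathbf{x}))\})|_{\mathcal{O}\setminus\{o\}}$ for $\{i,o\}\in\Gamma(s)$. If $\mathfrak{S}$ is closed under $\parallel,\gamma$ and $\{i,o\}\in\Gamma(s_1\parallel s_2)\iff\{i,o\}\in\Gamma(s_j)$ for $i,o\in\lambda(s_j)$, then $(\mathfrak{S},\lambda,\parallel,\Gamma,\gamma)$ is a functional $\Lambda$-system algebra over $\mathcal{X}$. It has unique fixed points if $|\mathrm{Fix}(s,i,o,\mathbf{x})|=1$ for all $s$, $\{i,o\}\in\Gamma(s)$, $\mathbf{x}$. $\Gamma$ permits reordering if for all $s$, $\{i,o\}\in\Gamma(s)$, $\{i',o'\}\in\Gamma(\gamma_{i,o}(s))$ we have $\{i',o'\}\in\Gamma(s)$ and $\{i,o\}\in\Gamma(\gamma_{i',o'}(s))$. The algebra is composition-order invariant if (i) $\Gamma$ permits reordering and $\gamma_{i',o'}(\gamma_{i,o}(s))=\gamma_{i,o}(\gamma_{i',o'}(s))$ in the situation just described, (ii) $\parallel$ is associative and commutative, and (iii) $\gamma_{i,o}(s_1)\parallel s_2=\gamma_{i,o}(s_1\parallel s_2)$ whenever $\lambda(s_1)\cap\lambda(s_2)=\emptyset$ and $\{i,o\}\in\Gamma(s_1)$. *)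

From mathcomp Require Import all_boot.
From mathcomp Require Import boolp classical_sets cardinality.

Set Implicit Arguments.
Unset Strict Implicit.
Unset Printing Implicit Defensive.

Local Open Scope classical_set_scope.

Section FunctionalSystems.
Variables (Lam X : Type).

Definition assign (A : set Lam) := {l : Lam | A l} -> X.

Record sys := Sys { sI : set Lam; sO : set Lam; sf : assign sI -> assign sO }.
Arguments sf : clear implicits.

Definition lam (s : sys) : set Lam := sI s `|` sO s.

Definition ext (I : set Lam) (i : Lam) (x : assign (I `\ i)) (xi : X)
  : assign I :=
  fun l => match pselect (sval l = i) with
           | left _ => xi
           | right h => x (exist _ (sval l) (conj (proj2_sig l) h))
           end.

(* Fix(s,i,o,x) as a predicate on X (o is assumed to be an output of s) *)
Definition Fix (s : sys) (i o : Lam) (x : assign (sI s `\ i)) (xi : X) : Prop :=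
  forall ho : sO s o, sf s (ext x xi) (exist _ o ho) = xi.
Arguments Fix : clear implicits.

Definition restr_minus (O : set Lam) (o : Lam) (y : assign O) : assign (O `\ o) :=
  fun l => y (exist _ (sval l) (proj1 (proj2_sig l))).

Definition restrU1 (A B : set Lam) (x : assign (A `|` B)) : assign A :=
  fun l => x (exist _ (sval l) (or_introl (proj2_sig l))).
Definition restrU2 (A B : set Lam) (x : assign (A `|` B)) : assign B :=
  fun l => x (exist _ (sval l) (or_intror (proj2_sig l))).

Definition orU2 (A B : set Lam) (l : Lam) (hU : (A `|` B) l) (hA : ~ A l) : B l :=
  match hU with
  | or_introl h1 => False_ind _ (hA h1)
  | or_intror h2 => h2
  end.

Definition par (s1 s2 : sys) : sys :=
  @Sys (sI s1 `|` sI s2) (sO s1 `|` sO s2)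
    (fun x l => match pselect (sO s1 (sval l)) with
                | left h => sf s1 (restrU1 x) (exist _ (sval l) h)
                | right h => sf s2 (restrU2 x)
                               (exist _ (sval l) (orU2 (proj2_sig l) h))
                end).

Definition gam (phi : forall (s : sys) (i o : Lam), assign (sI s `\ i) -> X)
  (s : sys) (i o : Lam) : sys :=
  @Sys (sI s `\ i) (sO s `\ o)
    (fun x => @restr_minus _ o (sf s (ext x (phi s i o x)))).

(* s1 || s2 is defined: the four index sets are pairwise disjoint
   (given that each s_j already has I_j, O_j disjoint) *)
Definition par_ok (s1 s2 : sys) : Prop := lam s1 `&` lam s2 = set0.

Definition functional_system_algebra (S : set sys) (Gam : sys -> Lam -> Lam -> Prop)
  (phi : forall (s : sys) (i o : Lam), assign (sI s `\ i) -> X) : Prop :=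
  [/\
      (forall s, S s ->
         [/\ finite_set (sI s), finite_set (sO s) & sI s `&` sO s = set0]),
      (forall s i o, S s -> Gam s i o ->
         [/\ sI s i, sO s o & forall x, exists xi, Fix s i o x xi]),
      (forall s i o, S s -> Gam s i o -> forall x, Fix s i o x (phi s i o x)),
      (forall s1 s2, S s1 -> S s2 -> par_ok s1 s2 -> S (par s1 s2)) /\
      (forall s i o, S s -> Gam s i o -> S (gam phi s i o)) &
      (forall s1 s2, S s1 -> S s2 -> par_ok s1 s2 ->
         (forall i o, lam s1 i -> lam s1 o -> (Gam (par s1 s2) i o <-> Gam s1 i o)) /\
         (forall i o, lam s2 i -> lam s2 o -> (Gam (par s1 s2) i o <-> Gam s2 i o)))].

Definition unique_fixed_points (S : set sys) (Gam : sys -> Lam -> Lam -> Prop) : Prop :=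
  forall s i o, S s -> Gam s i o ->
    forall x, exists xi, Fix s i o x xi /\ forall xi', Fix s i o x xi' -> xi' = xi.

Definition permits_reordering (S : set sys) (Gam : sys -> Lam -> Lam -> Prop)
  (phi : forall (s : sys) (i o : Lam), assign (sI s `\ i) -> X) : Prop :=
  forall s i o i' o', S s -> Gam s i o -> Gam (gam phi s i o) i' o' ->
    Gam s i' o' /\ Gam (gam phi s i' o') i o.

Definition composition_order_invariant (S : set sys) (Gam : sys -> Lam -> Lam -> Prop)
  (phi : forall (s : sys) (i o : Lam), assign (sI s `\ i) -> X) : Prop :=
  [/\
      permits_reordering S Gam phi /\
      (forall s i o i' o', S s -> Gam s i o -> Gam (gam phi s i o) i' o' ->
         gam phi (gam phi s i o) i' o' = gam phi (gam phi s i' o') i o),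
      (forall s1 s2 s3, S s1 -> S s2 -> S s3 ->
         par_ok s1 s2 -> par_ok s1 s3 -> par_ok s2 s3 ->
         par s1 (par s2 s3) = par (par s1 s2) s3) /\
      (forall s1 s2, S s1 -> S s2 -> par_ok s1 s2 -> par s1 s2 = par s2 s1) &
      (forall s1 s2 i o, S s1 -> S s2 -> par_ok s1 s2 -> Gam s1 i o ->
         par (gam phi s1 i o) s2 = gam phi (par s1 s2) i o)].

End FunctionalSystems.

(** With unique fixed points the chosen fixed point [phi] is determined by the
    fixed-point equation alone.  For two feedbacks, the fixed point [a] of the
    outer loop of [gam (gam s i' o') i o], together with the fixed point [b] of
    the inner loop at [a], is a simultaneous fixed point of both loops of [s];
    hence both orders evaluate [s] at the same input.  A feedback inside a
    parallel composition only sees the first component, whose fixed points are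
    those of the composite. *)

From mathcomp Require Import all_boot.
From mathcomp Require Import boolp classical_sets cardinality.

Set Implicit Arguments.
Unset Strict Implicit.
Unset Printing Implicit Defensive.

Local Open Scope classical_set_scope.

Section SystemAlgebra.
Variables (Lam X : Type).
Implicit Types (s : sys Lam X) (A B : set Lam).

(* Assignments on index sets that are only propositionally equal are compared
   through the indices they carry. *)
Definition agree A B (x : assign X A) (y : assign X B) : Prop :=
  forall a b, sval a = sval b -> x a = y b.

Lemma agree_refl A (x : assign X A) : agree x x.
Proof. by move=> [a p] [b q] /= ab; congr x; exact: eq_exist. Qed.

Lemma agreeE A (x y : assign X A) : agree x y <-> x = y.
Proof.
split=> [xy | ->]; last exact: agree_refl.
by apply: funext => a; exact: xy.
Qed.

Lemma sf_agree s (x y : assign X (sI s)) a b :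
  agree x y -> sval a = sval b -> sf x a = sf y b.
Proof. by move=> /agreeE ->; exact: agree_refl. Qed.

Lemma sf_sval s (x : assign X (sI s)) a b : sval a = sval b -> sf x a = sf x b.
Proof. exact/sf_agree/agree_refl. Qed.

Lemma eq_Sys I1 O1 I2 O2 (f1 : assign X I1 -> assign X O1)
    (f2 : assign X I2 -> assign X O2) :
  I1 = I2 -> O1 = O2 -> (forall x1 x2, agree x1 x2 -> agree (f1 x1) (f2 x2)) ->
  Sys f1 = Sys f2.
Proof.
move=> eI eO; subst I2 O2 => f12; congr Sys.
by apply: funext => x; apply/agreeE/f12/agreeE.
Qed.

Lemma par_ok_notin s1 s2 l : par_ok s1 s2 -> lam s1 l -> ~ lam s2 l.
Proof. by move=> ok l1 l2; have : (lam s1 `&` lam s2) l by []; rewrite ok. Qed.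

Lemma par_comm s1 s2 : par_ok s1 s2 -> par s1 s2 = par s2 s1.
Proof.
move=> ok; apply: eq_Sys; rewrite 1?setUC //.
move=> x1 x2 x12 [l p] [l' q] /= ll'; subst l'.
case: pselect => o1; case: pselect => o2.
- by case: (par_ok_notin ok (or_intror o1)); right.
- by apply: sf_agree => // a b ab; exact: x12.
- by apply: sf_agree => // a b ab; exact: x12.
- by case: p.
Qed.

Lemma par_assoc s1 s2 s3 : par s1 (par s2 s3) = par (par s1 s2) s3.
Proof.
apply: eq_Sys; rewrite 1?setUA //.
move=> x1 x2 x12 [l p] [l' q] /= ll'; subst l'.
repeat case: pselect => ? /=; try by exfalso; tauto.
all: by apply: sf_agree => // a b ab; exact: x12.
Qed.

Lemma extC I i i' (x : assign X (I `\ i `\ i')) (y : assign X (I `\ i' `\ i)) u v :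
  i <> i' -> agree x y -> ext (ext x u) v = ext (ext y v) u.
Proof.
move=> ii' xy; apply: funext => l; rewrite /ext /=.
by repeat case: pselect => ? //=; [congruence | exact: xy].
Qed.

Section UniqueFixedPoints.
Variables (S : set (sys Lam X)) (Gam : sys Lam X -> Lam -> Lam -> Prop)
  (phi : forall s (i o : Lam), assign X (sI s `\ i) -> X).
Arguments phi : clear implicits.
Hypothesis phi_Fix :
  forall s i o, S s -> Gam s i o -> forall x, @Fix Lam X s i o x (phi s i o x).
Hypothesis gam_closed : forall s i o, S s -> Gam s i o -> S (gam phi s i o).
Hypothesis ufp : unique_fixed_points S Gam.

Lemma Fix_eq_phi s i o x xi :
  S s -> Gam s i o -> @Fix Lam X s i o x xi -> xi = phi s i o x.
Proof.
move=> Ss G Fxi; have [z [_ zU]] := ufp Ss G x.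
by rewrite (zU _ Fxi) (zU _ (phi_Fix Ss G x)).
Qed.

Lemma par_gam s1 s2 i o : ~ sI s2 i -> ~ sO s2 o ->
  S s1 -> Gam s1 i o -> S (par s1 s2) -> Gam (par s1 s2) i o ->
  par (gam phi s1 i o) s2 = gam phi (par s1 s2) i o.
Proof.
move=> i2 o2 S1 G1 Sp Gp.
apply: eq_Sys; [by rewrite /= setDUl (not_setD1 i2) |
                by rewrite /= setDUl (not_setD1 o2) |].
move=> x1 x2 x12 [l p] [l' q] /= ll'; subst l'.
have ext12 u : ext (restrU1 x1) u = restrU1 (ext x2 u).
  apply: funext => m; rewrite /ext /restrU1 /=.
  by case: pselect => // ?; exact: x12.
have phi12 : phi (par s1 s2) i o x2 = phi s1 i o (restrU1 x1).
  apply: Fix_eq_phi => // o1; rewrite ext12.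
  have := phi_Fix Sp Gp x2 (or_introl o1); rewrite /=.
  by case: pselect => // o1'; rewrite (Prop_irrelevance o1' o1).
rewrite /restr_minus /=; case: pselect => l1; case: pselect => l1'.
- by apply: sf_agree; rewrite // -ext12 phi12; exact: agree_refl.
- by case: l1'; case: l1.
- by case: q => _ lo; case: l1; split.
- apply: (@sf_agree s2) => // a b /= ab; rewrite /restrU2 /ext /=.
  case: pselect => [bi | nbi]; last exact: x12.
  by case: i2; rewrite -bi -ab; case: a {ab}.
Qed.

Lemma gamC s i o i' o' : i <> i' -> o <> o' ->
  S s -> Gam s i o -> Gam s i' o' ->
  Gam (gam phi s i o) i' o' -> Gam (gam phi s i' o') i o ->
  gam phi (gam phi s i o) i' o' = gam phi (gam phi s i' o') i o.
Proof.
move=> ii' oo' Ss G G' Gi Gi'.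
have Si := gam_closed Ss G; have Si' := gam_closed Ss G'.
apply: eq_Sys; [by rewrite /= !setDDl setUC | by rewrite /= !setDDl setUC |].
move=> x1 x2 x12 [l p] [l' q] /= ll'; subst l'.
set a := phi (gam phi s i' o') i o x2.
set b := phi s i' o' (ext x2 a).
have ext12 : ext (ext x1 b) a = ext (ext x2 a) b := extC b a ii' x12.
have phi_i : a = phi s i o (ext x1 b).
  apply: Fix_eq_phi => // o1; rewrite ext12.
  have := phi_Fix Si' Gi' x2 (conj o1 oo'); rewrite /= /restr_minus /= => E.
  by apply: (eq_trans _ E); exact: sf_sval.
have phi_i' : b = phi (gam phi s i o) i' o' x1.
  apply: Fix_eq_phi => // -[o1' o'o] /=; rewrite /restr_minus /= -phi_i ext12.
  by apply: (eq_trans _ (phi_Fix Ss G' (ext x2 a) o1')); exact: sf_sval.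
rewrite /restr_minus /= -phi_i' -phi_i ext12.
exact: sf_sval.
Qed.

End UniqueFixedPoints.
End SystemAlgebra.

Theorem theorem4p7 (Lam X : Type) (S : set (sys Lam X))
  (Gam : sys Lam X -> Lam -> Lam -> Prop)
  (phi : forall (s : sys Lam X) (i o : Lam), assign X (sI s `\ i) -> X) :
  functional_system_algebra S Gam phi ->
  unique_fixed_points S Gam ->
  permits_reordering S Gam phi ->
  composition_order_invariant S Gam phi.
Proof.
move=> [_ Gam_in phi_Fix [par_closed gam_closed] Gam_par] ufp reorder.
split; last first.
- move=> s1 s2 i o S1 S2 ok G.
  have [i1 o1 _] := Gam_in _ _ _ S1 G.
  have Gp := (Gam_par _ _ S1 S2 ok).1 i o (or_introl i1) (or_intror o1).
  apply: (par_gam phi_Fix ufp) => //; [| | exact: par_closed | exact: Gp.2].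
  + by move=> i2; apply: (par_ok_notin ok (or_introl i1)); left.
  + by move=> o2; apply: (par_ok_notin ok (or_intror o1)); right.
- by split=> *; [exact: par_assoc | exact: par_comm].
split=> // s i o i' o' Ss G Gi.
have [G' Gi'] := reorder _ _ _ _ _ Ss G Gi.
have [[_ i'i] [_ o'o] _] := Gam_in _ _ _ (gam_closed _ _ _ Ss G) Gi.
by apply: (gamC phi_Fix gam_closed ufp) => // e; [apply: i'i | apply: o'o].
Qed.
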